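(* Let $\varepsilon>0$ and let $\lambda:[0,\infty)\to[0,\infty)$ be a BS density function. For a 1-D SCS with BS density function $\nu$, denote by $\left.\frac{C}{I}\right|_{\nu(r)}$ the random variable $\frac{R_1^{-\varepsilon}}{\sum_{i=2}^\infty R_i^{-\varepsilon}}$, where $R_1\le R_2\le\cdots$ are the ordered points of a Poisson point process on $[0,\infty)$ with intensity $\nu$. Then for every $a>0$, $$\left.\frac{C}{I}\right|_{\lambda(r)}=_{\mathrm{st}}\left.\frac{C}{I}\right|_{\frac1a\lambda(\frac ra)},$$ i.e. the two random variables have the same distribution.
   Context: A 1-D shotgun cellular system (SCS) with BS density function $\lambda(r)$ is a Poisson point process on $[0,\infty)$ with intensity $\lambda$, whose points are distances of base stations from a mobile station at the origin; all BSs have unit transmission power and unit shadow fading, path loss is $R^{-\varepsilon}$, and the mobile is served by the nearest BS, so the carrier-to-interference ratio is $\frac{C}{I}=\frac{R_1^{-\varepsilon}}{\sum_{i\ge2}R_i^{-\varepsilon}}$. For random variables $X,Y$, $X=_{\mathrm{st}}Y$ means $\mathbb P(X>x)=\mathbb P(Y>x)$ for all real $x$. *)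

From HB Require Import structures.
From mathcomp Require Import all_boot all_order all_algebra.
From mathcomp Require Import all_classical all_reals all_analysis.
Set Implicit Arguments. Unset Strict Implicit. Unset Printing Implicit Defensive.
Import Order.TTheory GRing.Theory Num.Theory.
Local Open Scope classical_set_scope.
Local Open Scope ring_scope.

Section SCS.
Context {R : realType}.

Definition num_points_eq {T : Type} (Rs : nat -> T -> R) (A : set R) (w : T)
  (k : nat) : Prop :=
  exists s : seq nat, [/\ uniq s, size s = k & forall i, A (Rs i w) <-> i \in s].

Definition poisson_pmf (m : R) (k : nat) : R :=
  expR (- m) * m ^+ k / (k`!)%:R.

Definition intensity_mass (lam : R -> R) (A : set R) : R :=
  fine (\int[lebesgue_measure]_(x in A) (lam x)%:E)%E.

(* Rs 0 <= Rs 1 <= ... are the ordered points of a Poisson point process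
   on [0, oo) with intensity lam, defined on the probability space P:
   counts in disjoint bounded Borel subsets of [0,oo) are independent
   Poisson variables with means int_A lam. *)
Definition is_PPP {d} {T : measurableType d} (P : probability T R)
  (lam : R -> R) (Rs : nat -> T -> R) : Prop :=
  [/\ (forall i, measurable_fun setT (Rs i)),
      (forall w, 0 <= Rs 0%N w),
      (forall i w, Rs i w <= Rs i.+1 w) &
      forall (n : nat) (A : 'I_n -> set R) (k : 'I_n -> nat),
        (forall j, measurable (A j)) ->
        (forall j, exists M : R, A j `<=` `[0, M]) ->
        (forall j j', j != j' -> A j `&` A j' = set0) ->
        P (\bigcap_(j in [set: 'I_n]) [set w | num_points_eq Rs (A j) w (k j)])
        = (\prod_(j < n) poisson_pmf (intensity_mass lam (A j)) (k j))%:E].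

(* C/I = R_1^{-eps} / sum_{i>=2} R_i^{-eps}  (indices shifted to start at 0),
   as an extended real (interference may be infinite). *)
Definition CI_ratio {T : Type} (eps : R) (Rs : nat -> T -> R) (w : T) : \bar R :=
  (((Rs 0%N w) `^ (- eps))%:E *
   (\sum_(1 <= i <oo) ((Rs i w) `^ (- eps))%:E)^-1)%E.

End SCS.

From Pilot Require Import Defs.
From HB Require Import structures.
From mathcomp Require Import all_boot all_order all_algebra.
From mathcomp Require Import all_classical all_reals all_analysis.
From mathcomp Require Import measurable_realfun.
Import Order.TTheory GRing.Theory Num.Theory.
Local Open Scope classical_set_scope.
Local Open Scope ring_scope.

(* C/I is homogeneous of degree 0 in the distances (R_i), so it suffices to
   show that (R2_i / a), where R2 has intensity r |-> lam (r / a) / a, has the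
   same law on path space as the process R1 of intensity lam.  Both laws agree
   on the pi-system of cylinders {t_l < y_(i_l), l < m}: such an event says
   that each [0, t_l] holds at most i_l points, hence it decomposes along the
   point counts of the finitely many atoms generated by the intervals [0, t_l];
   these counts are independent Poisson variables, and the substitution
   r = a s shows that every atom has the same mass under both intensities.
   Uniqueness of measures agreeing on a generating pi-system then gives
   equality on the measurable C/I events. *)

Section PointCounts.
Context {R : realType} {T : Type} {Rs : nat -> T -> R} {w : T}.
Implicit Types (A B : set R) (k : nat).

Lemma num_points_eq_uniq {A k k'} :
  num_points_eq Rs A w k -> num_points_eq Rs A w k' -> k = k'.
Proof.
move=> [s [us <- hs]] [s' [us' <- hs']].
apply: perm_size; apply: uniq_perm => // i.
by apply/idP/idP => H; [apply/(hs' i).1/(hs i).2 | apply/(hs i).1/(hs' i).2].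
Qed.

Lemma num_points_eq_subset {A B k} : B `<=` A ->
  num_points_eq Rs A w k -> exists2 k', (k' <= k)%N & num_points_eq Rs B w k'.
Proof.
move=> BA [s [us <- hs]].
pose sB := [seq i <- s | `[< B (Rs i w) >]].
exists (size sB); first by rewrite size_filter count_size.
exists sB; split => //; first exact: filter_uniq.
move=> i; rewrite mem_filter; split.
  by move=> Bi; apply/andP; split; [apply/asboolP|apply/(hs i).1/BA].
by case/andP => /asboolP.
Qed.

Lemma num_points_eq0 : num_points_eq Rs set0 w 0.
Proof. by exists [::]; split => // i; split. Qed.

Lemma num_points_eqU A B k k' : A `&` B = set0 ->
  num_points_eq Rs A w k -> num_points_eq Rs B w k' ->
  num_points_eq Rs (A `|` B) w (k + k').
Proof.
move=> AB [s [us <- hs]] [s' [us' <- hs']].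
exists (s ++ s'); split.
- rewrite cat_uniq us us' /= andbT; apply/hasPn => i /(hs' i).2 Bi.
  apply/negP => /(hs i).2 Ai.
  by have : (A `&` B) (Rs i w) by []; rewrite AB.
- by rewrite size_cat.
- move=> i; rewrite mem_cat; split.
    by case=> [/(hs i).1->|/(hs' i).1->]; rewrite ?orbT.
  by case/orP => [/(hs i).2|/(hs' i).2]; [left|right].
Qed.

Lemma num_points_eq_bigcup (I : eqType) (r : seq I) (F : I -> set R)
    (c : I -> nat) : uniq r ->
  (forall i j, i != j -> F i `&` F j = set0) ->
  (forall i, i \in r -> num_points_eq Rs (F i) w (c i)) ->
  num_points_eq Rs (\bigcup_(i in [set i | i \in r]) F i) w (\sum_(i <- r) c i)%N.
Proof.
elim: r => [|i r IH] /= ur disj hc.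
  rewrite big_nil; suff -> : \bigcup_(i in [set i | i \in [::]]) F i = set0.
    exact: num_points_eq0.
  by apply/seteqP; split => z // [].
move/andP: ur => [ir ur].
have -> : \bigcup_(j in [set j | j \in i :: r]) F j =
    F i `|` \bigcup_(j in [set j | j \in r]) F j.
  apply/seteqP; split => z /=.
    by move=> [j] /=; rewrite inE => /orP[/eqP->|jr Fz]; [left|right; exists j].
  case=> [Fz|[j /= jr Fz]]; first by exists i => //=; rewrite inE eqxx.
  by exists j => //=; rewrite inE jr orbT.
rewrite big_cons; apply: num_points_eqU; last 2 first.
- by apply: hc; rewrite inE eqxx.
- by apply: IH => // j jr; apply: hc; rewrite inE jr orbT.
apply/seteqP; split => z // [Fiz [j jr Fjz]].
have ij : i != j by apply: contraNneq ir => ->.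
by have : (F i `&` F j) z by []; rewrite disj.
Qed.

End PointCounts.

Section IntervalAtoms.
Context {R : realType} {m : nat} (t : 'I_m -> R).
Implicit Types (b : {ffun 'I_m -> bool}) (l : 'I_m).

(* The empty pattern [b] is discarded so that every atom is bounded. *)
Definition itv_atom b : set R :=
  [set r | [exists l, b l] && [forall l, b l == (r \in `[0, t l])]].

Lemma itv_atom_disj b b' : b != b' -> itv_atom b `&` itv_atom b' = set0.
Proof.
move=> bb'; apply/seteqP; split => r // [/andP[_ /forallP h] /andP[_ /forallP h']].
suff bb : b = b' by rewrite bb eqxx in bb'.
by apply/ffunP => l; rewrite (eqP (h l)) (eqP (h' l)).
Qed.

Lemma itv_atom_sub {b l} : b l -> itv_atom b `<=` `[0, t l]%classic.
Proof. by move=> bl r /andP[_ /forallP /(_ l)]; rewrite bl eq_sym => /eqP. Qed.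

Lemma itv_atom0 b : ~~ [exists l, b l] -> itv_atom b = set0.
Proof. by move=> /negbTE nb; apply/seteqP; split => r //; rewrite /itv_atom /= nb. Qed.

Lemma itv_bigcup_atoms l :
  `[0, t l]%classic =
  \bigcup_(b in [set b | b \in [seq b : {ffun 'I_m -> bool} <- enum {ffun 'I_m -> bool} | b l]])
    itv_atom b.
Proof.
apply/seteqP; split => z /=.
  move=> zl; exists [ffun l' => z \in `[0, t l']].
    by rewrite /= mem_filter ffunE zl mem_enum.
  apply/andP; split; first by apply/existsP; exists l; rewrite ffunE.
  by apply/forallP => l'; rewrite ffunE.
move=> [b] /=; rewrite mem_filter => /andP[bl _] /andP[_ /forallP /(_ l)].
by rewrite bl eq_sym => /eqP.
Qed.

Lemma itv_atom_bounded b : exists M : R, itv_atom b `<=` `[0, M]%classic.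
Proof.
have [/existsP[l bl]|nb] := boolP [exists l, b l]; last by exists 0; rewrite itv_atom0.
by exists (t l); exact: itv_atom_sub.
Qed.

Lemma measurable_itv_atom b : measurable (itv_atom b).
Proof.
have [eb|nb] := boolP [exists l, b l]; last by rewrite itv_atom0.
have -> : itv_atom b = \bigcap_(l in [set: 'I_m])
    (if b l then `[0, t l]%classic else ~` `[0, t l]%classic).
  apply/seteqP; split => r /=.
    move=> /andP[_ /forallP h] l _; move/eqP: (h l) => ->.
    by case: ifPn => //= /negP.
  move=> h; rewrite /itv_atom /= eb /=; apply/forallP => l; have := h l I.
  by case: (b l) => /= H; [rewrite H|apply/eqP/esym/negP].
apply: fin_bigcap_measurable; first exact: finite_finset.
by move=> l _; case: ifPn => _; [|apply: measurableC]; exact: measurable_itv.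
Qed.

End IntervalAtoms.

(* Counts are capped by [\sum_l ii l] so that admissible count profiles form a
   finite type. *)
Definition admissible_counts {m : nat} (ii : 'I_m -> nat)
    (u : {ffun {ffun 'I_m -> bool} -> 'I_(\sum_(l < m) ii l).+1}) :=
  [forall l, (\sum_(b <- enum {ffun 'I_m -> bool} | b l) (u b : nat) <= ii l)%N].

Section OrderedPoints.
Context {R : realType} {T : Type} {Rs : nat -> T -> R} {w : T}.
Hypotheses (Rs0_ge0 : 0 <= Rs 0%N w) (Rs_nd : nondecreasing_seq (Rs ^~ w)).

Lemma points_ge0 i : 0 <= Rs i w.
Proof. exact: le_trans Rs0_ge0 (Rs_nd _ _ (leq0n i)). Qed.

Lemma lt_point_count t i :
  t < Rs i w <-> exists2 k, (k <= i)%N & num_points_eq Rs `[0, t]%classic w k.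
Proof.
split.
  move=> tRi; pose s := [seq j <- iota 0 i | Rs j w <= t].
  exists (size s); first by rewrite size_filter (leq_trans (count_size _ _)) ?size_iota.
  exists s; split => //; first by rewrite filter_uniq // iota_uniq.
  move=> j; rewrite mem_filter mem_iota /= add0n in_itv /= points_ge0 /=.
  split => [Rjt|/andP[]//]; rewrite Rjt /= ltnNge; apply/negP => ij.
  by have := lt_le_trans tRi (Rs_nd _ _ ij); rewrite ltNge Rjt.
move=> [k ki [s [us sk hs]]]; rewrite ltNge; apply/negP => Rit.
have : (i.+1 <= size s)%N.
  rewrite -(size_iota 0 i.+1); apply: uniq_leq_size; first exact: iota_uniq.
  move=> j; rewrite mem_iota add0n /= => ji; apply/(hs j).1 => /=.
  by rewrite in_itv /= points_ge0 (le_trans _ Rit) // Rs_nd.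
by rewrite sk ltnNge ki.
Qed.

Lemma num_points_itv {m} (t : 'I_m -> R) l {u : {ffun 'I_m -> bool} -> nat} :
  (forall b, num_points_eq Rs (itv_atom t b) w (u b)) ->
  num_points_eq Rs `[0, t l]%classic w
    (\sum_(b <- enum {ffun 'I_m -> bool} | b l) u b)%N.
Proof.
move=> hu; rewrite itv_bigcup_atoms -big_filter.
apply: num_points_eq_bigcup => //; last exact: itv_atom_disj.
by rewrite filter_uniq // enum_uniq.
Qed.

Lemma lt_points_atom_counts {m} (t : 'I_m -> R) (ii : 'I_m -> nat) :
  (forall l, t l < Rs (ii l) w) <->
  exists u, admissible_counts ii u /\
            forall b, num_points_eq Rs (itv_atom t b) w (u b).
Proof.
split; last first.
  move=> [u [/forallP adm hu]] l; apply/lt_point_count.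
  exists (\sum_(b <- enum {ffun 'I_m -> bool} | b l) u b)%N; first exact: adm.
  exact: num_points_itv.
move=> tRi.
have count_itv l : exists2 k, (k <= ii l)%N & num_points_eq Rs `[0, t l]%classic w k.
  exact/lt_point_count.
have count_atom b : exists c, (c <= \sum_(l < m) ii l)%N /\
    num_points_eq Rs (itv_atom t b) w c.
  have [/existsP[l bl]|nb] := boolP [exists l, b l]; last first.
    by exists 0%N; rewrite itv_atom0 //; split => //; exact: num_points_eq0.
  have [k kl nk] := count_itv l.
  have [c ck nc] := num_points_eq_subset (itv_atom_sub t bl) nk.
  exists c; split => //; apply: leq_trans ck _; apply: leq_trans kl _.
  by rewrite (bigD1 l) //= leq_addr.
have [c hc] := choice count_atom.
have cE b : ([ffun b => inord (c b)] b : 'I_(\sum_(l < m) ii l).+1) = c b :> nat.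
  by rewrite ffunE inordK // ltnS; case: (hc b).
exists [ffun b => inord (c b)]; split; last by move=> b; rewrite cE; case: (hc b).
apply/forallP => l; have [k kl nk] := count_itv l.
under eq_bigr do rewrite cE.
by rewrite -(num_points_eq_uniq nk (num_points_itv t l (fun b => (hc b).2))).
Qed.

End OrderedPoints.

Section PoissonProcess.
Context {R : realType} {d : measure_display} {T : measurableType d}
  {P : probability T R} {lam : R -> R} {Rs : nat -> T -> R}.
Hypothesis hP : is_PPP P lam Rs.

Lemma is_PPP_ge0 w : 0 <= Rs 0%N w.
Proof. by case: hP. Qed.

Lemma is_PPP_nondecreasing w : nondecreasing_seq (Rs ^~ w).
Proof. by apply/nondecreasing_seqP => i; case: hP => _ _ + _; apply. Qed.

Lemma measurable_PPP_preimage i A : measurable A -> measurable (Rs i @^-1` A).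
Proof. by case: hP => mR _ _ _ mA; rewrite -[_ @^-1` _]setTI; exact: mR. Qed.

Lemma measurable_num_points_eq A k :
  measurable A -> measurable [set w | num_points_eq Rs A w k].
Proof.
move=> mA.
have -> : [set w | num_points_eq Rs A w k] = \bigcup_(s : seq nat)
    (if uniq s && (size s == k) then
      \bigcap_i (if i \in s then Rs i @^-1` A else ~` (Rs i @^-1` A)) else set0).
  apply/seteqP; split => w /=.
    move=> [s [us sk hs]]; exists s => //; rewrite us sk eqxx /= => i _.
    by case: ifPn => [/(hs i).2|si]//= /(hs i).1; rewrite (negbTE si).
  move=> [s _]; case: ifPn => // /andP[us /eqP sk] h; exists s; split => // i.
  have := h i I; case: ifPn => si /=; first by split.
  by split => // Ai; exfalso; apply: h i I.
apply: countable_bigcupT_measurable; first exact: countableP.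
move=> s; case: ifPn => // _; apply: bigcapT_measurable => i.
by case: ifPn => _; [|apply: measurableC]; exact: measurable_PPP_preimage.
Qed.

Lemma measurable_lt_points m (ii : 'I_m -> nat) (t : 'I_m -> R) :
  measurable [set w | forall l, t l < Rs (ii l) w].
Proof.
have -> : [set w | forall l, t l < Rs (ii l) w] =
    \bigcap_(l in [set: 'I_m]) (Rs (ii l) @^-1` `]t l, +oo[%classic).
  by apply/seteqP; split => w /= h l; [move=> _|have := h l I];
    rewrite /= in_itv /= andbT //; apply: h.
apply: fin_bigcap_measurable; first exact: finite_finset.
by move=> l _; apply: measurable_PPP_preimage; exact: measurable_itv.
Qed.

(* The event splits according to the point counts in the atoms, which are
   independent Poisson variables. *)
Lemma is_PPP_lt_points m (ii : 'I_m -> nat) (t : 'I_m -> R) :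
  P [set w | forall l, t l < Rs (ii l) w] =
  (\sum_(u \in [set u | admissible_counts ii u])
    (\prod_(j < #|{ffun 'I_m -> bool}|)
       Defs.poisson_pmf (intensity_mass lam (itv_atom t (enum_val j)))
                   (u (enum_val j)))%:E)%E.
Proof.
pose cyl (u : {ffun {ffun 'I_m -> bool} -> 'I_(\sum_(l < m) ii l).+1}) :=
  \bigcap_(b in [set: {ffun 'I_m -> bool}])
    [set w | num_points_eq Rs (itv_atom t b) w (u b)].
have -> : [set w | forall l, t l < Rs (ii l) w] =
    \bigcup_(u in [set u | admissible_counts ii u]) cyl u.
  apply/seteqP; split => w /=.
    move/(lt_points_atom_counts (is_PPP_ge0 w) (is_PPP_nondecreasing w)).
    by move=> [u [adm hu]]; exists u => // b _; exact: hu.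
  move=> [u adm hu].
  apply/(lt_points_atom_counts (is_PPP_ge0 w) (is_PPP_nondecreasing w)).
  by exists u; split => // b; apply: hu.
rewrite measure_fin_bigcup //; last first.
- move=> u _; apply: fin_bigcap_measurable; first exact: finite_finset.
  by move=> b _; apply: measurable_num_points_eq; exact: measurable_itv_atom.
- move=> u u' _ _ [w [hu hu']]; apply/ffunP => b; apply/val_inj.
  exact: num_points_eq_uniq (hu b I) (hu' b I).
- exact: finite_finset.
apply: eq_fsbigr => u _; case: hP => _ _ _ counts_poisson; rewrite -counts_poisson.
- congr (P _); apply/seteqP; split => w /= h b _; first exact: h.
  by rewrite -(enum_rankK b); exact: h.
- by move=> j; exact: measurable_itv_atom.
- by move=> j; exact: itv_atom_bounded.
- move=> j j' jj'; apply: itv_atom_disj.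
  by apply: contra jj' => /eqP /enum_val_inj ->.
Qed.

End PoissonProcess.

Section LebesgueDilation.
Context {R : realType} (a : R) (ha : 0 < a).
Local Notation mu := (@lebesgue_measure R).

Let div_a (r : measurableTypeR R) : measurableTypeR R := r / a.
Let measurable_div_a : measurable_fun setT div_a.
Proof. exact: mulrr_measurable. Qed.

Lemma lebesgue_pushforward_div A :
  measurable A -> pushforward mu div_a A = (a%:E * mu A)%E.
Proof.
move=> mA; have ainv_ge0 : 0 <= a^-1 by rewrite invr_ge0 ltW.
pose pf := measure_function_pushforward__canonical__measure_function_Measure
  mu measurable_div_a.
have := @lebesgue_measure_unique R (mscale (NngNum ainv_ge0) pf) _ A mA.
rewrite /mscale /= => ->; last first.
  move=> _ [[x1 x2] _ <-]; rewrite /mscale /= /pushforward /=.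
  have -> : div_a @^-1` `]x1, x2]%classic = `]x1 * a, x2 * a]%classic.
    by apply/seteqP; split => r /=; rewrite !in_itv /= ltr_pdivlMr // ler_pdivrMr.
  rewrite !lebesgue_measure_itv /= !lte_fin ltr_pM2r //.
  case: ifPn => _; last by rewrite mule0.
  by rewrite -EFinD -EFinM -mulrBl mulrCA mulVf ?gt_eqF // mulr1.
by rewrite muleA -EFinM divff ?gt_eqF // mul1e.
Qed.

Lemma ge0_integral_dilation (f : R -> R) (X : set R) : measurable X ->
  measurable_fun X (fun x => (f x)%:E) -> (forall x, X x -> 0 <= f x) ->
  (\int[mu]_(x in [set r | X (r / a)%R]) (a^-1 * f (x / a))%R%:E =
   \int[mu]_(x in X) (f x)%:E)%E.
Proof.
move=> mX mf f_ge0; have a_ge0 : 0 <= a by rewrite ltW.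
have mfa : measurable_fun X (fun z => (a^-1 * f z)%:E).
  under eq_fun do rewrite EFinM.
  by apply: emeasurable_funM => //; exact: measurable_cst.
transitivity (\int[pushforward mu div_a]_(z in X) (a^-1 * f z)%:E)%E.
  rewrite (ge0_integral_pushforward measurable_div_a) //.
  by move=> z /[!inE] Xz; rewrite lee_fin mulr_ge0 ?invr_ge0 ?f_ge0.
rewrite (eq_measure_integral (mscale (NngNum a_ge0) mu)); last first.
  by move=> B mB _; rewrite /= lebesgue_pushforward_div.
rewrite ge0_integral_mscale //; last first.
  by move=> z Xz; rewrite lee_fin mulr_ge0 ?invr_ge0 ?f_ge0.
under eq_integral do rewrite EFinM.
rewrite ge0_integralZl ?lee_fin ?invr_ge0 //.
by rewrite /= muleA -EFinM divff ?gt_eqF // mul1e.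
Qed.

End LebesgueDilation.

Section IntensityScaling.
Context {R : realType} (a : R) (ha : 0 < a) (lam : R -> R).
Hypotheses (lam_ge0 : forall r, 0 <= r -> 0 <= lam r)
  (lam_loc : forall r, 0 <= r ->
     lebesgue_measure.-integrable `[0, r] (fun x => (lam x)%:E)).

Lemma itv_atom_scale m (t : 'I_m -> R) b :
  itv_atom (fun l => a * t l) b = [set r | itv_atom t b (r / a)].
Proof.
have in_scaled r l : (r \in `[0, a * t l]) = (r / a \in `[0, t l]).
  by rewrite !in_itv /= ler_pdivlMr // mul0r ler_pdivrMr // mulrC.
by apply/seteqP; split => r /andP[e /forallP h]; apply/andP; split => //;
  apply/forallP => l; [rewrite -in_scaled|rewrite in_scaled]; exact: h.
Qed.

Lemma intensity_mass_scale m (t : 'I_m -> R) b :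
  intensity_mass (fun r => a^-1 * lam (r / a)) (itv_atom (fun l => a * t l) b) =
  intensity_mass lam (itv_atom t b).
Proof.
have [M atomM] := itv_atom_bounded t b.
rewrite /intensity_mass itv_atom_scale ge0_integral_dilation //.
- exact: measurable_itv_atom.
- have M0 : 0 <= Num.max 0 M by rewrite le_max lexx.
  have sub : itv_atom t b `<=` `[0, Num.max 0 M]%classic.
    move=> r /atomM; rewrite /= !in_itv /= => /andP[-> rM] /=.
    by rewrite le_max rM orbT.
  have mlam := measurable_int _ (lam_loc _ M0).
  exact: measurable_funS (measurable_itv _) sub mlam.
- by move=> x /atomM; rewrite /= in_itv /= => /andP[x0 _]; exact: lam_ge0 x0.
Qed.

End IntensityScaling.

Section InverseMeasurable.
Context {R : realType}.
Local Open Scope ereal_scope.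

Lemma inve_in_itv_oy (r : R) (x : \bar R) : 0 <= x ->
  (x^-1 \in `]r%:E, +oo[) = (if (r < 0)%R then true else x < r%:E^-1).
Proof.
move=> x0; rewrite in_itv /= andbT; case: ifPn => r0.
  have xi : 0 <= x^-1 by rewrite inve_ge0.
  by apply/idP; apply: lt_le_trans xi; rewrite lte_fin.
by rewrite inve_pgt // inE lee_fin leNgt.
Qed.

Lemma measurable_inve_ge0 : measurable_fun [set x : \bar R | 0 <= x] inve.
Proof.
have mge (c : \bar R) : measurable [set x : \bar R | c <= x].
  by rewrite -[X in measurable X]setTI; exact: emeasurable_fun_c_infty.
apply: (measurability _ (ErealGenOInfty.measurableE R)) => _ [_ [r ->] <-].
have -> : [set x : \bar R | 0 <= x] `&` inve @^-1` `]r%:E, +oo[%classic =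
    [set x | 0 <= x] `&` (if (r < 0)%R then setT else [set x | x < r%:E^-1]).
  by apply/seteqP; split => x /= [x0]; rewrite /= ?inve_in_itv_oy //;
    case: ifPn.
apply: measurableI; first exact: mge.
case: ifPn => _; first exact: measurableT.
by rewrite -[X in measurable X]setTI; exact: emeasurable_fun_infty_o.
Qed.

End InverseMeasurable.

(* A named copy of [nat -> R], carrying the pointed structure that
   [g_sigma_algebraType] requires. *)
Definition realseq (R : realType) := nat -> R.
HB.instance Definition _ (R : realType) := gen_eqMixin (realseq R).
HB.instance Definition _ (R : realType) := gen_choiceMixin (realseq R).
HB.instance Definition _ (R : realType) := isPointed.Build (realseq R) (fun _ => 0).

Definition lt_cylinder {R : realType} (s : seq (nat * R)) : set (realseq R) :=
  [set y | forall p, p \in s -> p.2 < y p.1].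

Definition lt_cylinders {R : realType} : set (set (realseq R)) := range lt_cylinder.

Notation paths R := (g_sigma_algebraType (@lt_cylinders R)).

Section PathSpace.
Context {R : realType}.
Local Notation paths := (paths R).

Lemma lt_cylinders_setI_closed : setI_closed (@lt_cylinders R).
Proof.
move=> _ _ [s _ /esym ->] [s' _ /esym ->]; exists (s ++ s') => //.
rewrite /lt_cylinder; apply/seteqP; split => y /=.
  by move=> h; split => p ps; apply: h; rewrite mem_cat ps ?orbT.
by move=> [h h'] p; rewrite mem_cat => /orP[/h|/h'].
Qed.

Lemma measurable_coord i : measurable_fun [set: paths] (fun y : paths => y i : R).
Proof.
apply: (measurability _ (RGenOInfty.measurableE R)) => _ [_ [r ->] <-].
apply: sub_sigma_algebra; exists [:: (i, r)] => //.
rewrite /lt_cylinder; apply/seteqP; split => y /=.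
  by move=> h; split => //; rewrite in_itv /= andbT; apply: (h (i, r)); rewrite inE.
by move=> [_]; rewrite in_itv /= andbT => ri p; rewrite inE => /eqP ->.
Qed.

Lemma measurable_CI_ratio_gt (eps x : R) :
  measurable [set y : paths | (x%:E < CI_ratio eps (fun i (y : realseq R) => y i) y)%E].
Proof.
have mpow i : measurable_fun [set: paths] (fun y : paths => ((y i) `^ (- eps))%:E).
  apply/measurable_EFinP.
  exact: measurableT_comp (measurable_powR _) (measurable_coord i).
have mI : measurable_fun [set: paths]
    (fun y : paths => (\sum_(1 <= i <oo) ((y i) `^ (- eps))%:E)%E).
  under eq_fun do rewrite eseries_cond.
  by apply: ge0_emeasurable_sum => [k y _ _|k _]; rewrite ?lee_fin ?powR_ge0.
have mIinv : measurable_fun [set: paths]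
    (fun y : paths => ((\sum_(1 <= i <oo) ((y i) `^ (- eps))%:E)^-1)%E).
  apply: (measurable_comp (F := [set x : \bar R | (0 <= x)%E])).
  - by rewrite -[X in measurable X]setTI; exact: emeasurable_fun_c_infty.
  - by move=> _ [y _ <-]; apply: nneseries_ge0 => n _ _; rewrite lee_fin powR_ge0.
  - exact: measurable_inve_ge0.
  - exact: mI.
have := emeasurable_fun_o_infty measurableT (emeasurable_funM (mpow 0%N) mIinv) x%:E.
by rewrite setTI.
Qed.

End PathSpace.

Definition scaled_paths {R : realType} {T : Type} (c : R) (Rs : nat -> T -> R)
  (w : T) : realseq R := fun i => c * Rs i w.

Lemma CI_ratio_scale {R : realType} {T : Type} (eps c : R) (Rs : nat -> T -> R) w :
  0 < c -> (forall i, 0 <= Rs i w) ->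
  CI_ratio eps (fun i (y : realseq R) => y i) (scaled_paths c Rs w) =
  CI_ratio eps Rs w.
Proof.
move=> c0 Rs_ge0; rewrite /CI_ratio /scaled_paths.
have k0 : 0 < c `^ (- eps) by apply: powR_gt0.
under eq_eseriesr => i _ do rewrite powRM ?(ltW c0) // EFinM.
rewrite nneseriesZl; last by move=> i _; rewrite lee_fin powR_ge0.
rewrite powRM ?(ltW c0) //.
have : (0 <= \sum_(1 <= i <oo) ((Rs i w) `^ (- eps))%:E)%E.
  by apply: nneseries_ge0 => i _ _; rewrite lee_fin powR_ge0.
move: (\sum_(1 <= i <oo) _)%E (Rs 0%N w `^ (- eps)) (powR_ge0 (Rs 0%N w) (- eps)).
move: (c `^ (- eps)) k0 => k k0 [r| |] u r0 u0 //.
- rewrite -EFinM !inver mulf_eq0 (gt_eqF k0) orFb.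
  case: ifPn => r00; first by rewrite mulry [RHS]mulry sgrM gtr0_sg // mul1r.
  by rewrite -!EFinM invfM mulrACA mulfV ?gt_eqF // mul1r.
- by rewrite mulry gtr0_sg // mul1e invey !mule0.
Qed.

Definition cylinder_index {R : realType} (s : seq (nat * R)) (l : 'I_(size s)) :=
  (nth (0%N, 0) s l).1.
Definition cylinder_threshold {R : realType} (s : seq (nat * R)) (l : 'I_(size s)) :=
  (nth (0%N, 0) s l).2.

Lemma lt_cylinder_ord {R : realType} (s : seq (nat * R)) (y : realseq R) :
  lt_cylinder s y <-> forall l, cylinder_threshold s l < y (cylinder_index s l).
Proof.
split => [h l|h p /(nthP (0%N, 0)) [i ilt <-]]; first by apply: h; rewrite mem_nth.
exact: (h (Ordinal ilt)).
Qed.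

Section ScaledPaths.
Context {R : realType} {d : measure_display} {T : measurableType d}
  {P : probability T R} {lam : R -> R} {Rs : nat -> T -> R} {c : R}.
Hypotheses (hP : is_PPP P lam Rs) (c_gt0 : 0 < c).

Lemma scaled_paths_preimage_cylinder s :
  scaled_paths c Rs @^-1` lt_cylinder s =
  [set w | forall l, cylinder_threshold s l / c < Rs (cylinder_index s l) w].
Proof.
apply/seteqP; split => w /=.
  by move=> /lt_cylinder_ord h l; rewrite ltr_pdivrMr // mulrC; exact: h.
move=> h; apply/lt_cylinder_ord => l.
by rewrite /scaled_paths mulrC -ltr_pdivrMr //; exact: h.
Qed.

Lemma measurable_scaled_paths :
  measurable_fun [set: T] (scaled_paths c Rs : T -> paths R).
Proof.
apply: (measurability (@lt_cylinders R : set (set (paths R)))) => // _ [_ [s _ <-] <-].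
rewrite setTI; move: (scaled_paths_preimage_cylinder s) => /= ->.
exact: (measurable_lt_points hP _ (cylinder_index s)
  (fun l => cylinder_threshold s l / c)).
Qed.

Lemma scaled_paths_preimage_CI_ratio_gt (eps x : R) :
  scaled_paths c Rs @^-1` [set y | (x%:E < CI_ratio eps (fun i y => y i) y)%E] =
  [set w | (x%:E < CI_ratio eps Rs w)%E].
Proof.
apply/seteqP; split => w /=; rewrite CI_ratio_scale //;
  exact: points_ge0 (is_PPP_ge0 hP w) (is_PPP_nondecreasing hP w).
Qed.

End ScaledPaths.

Section ScaledProcess.
Context {R : realType} {a : R} (ha : 0 < a) {lam : R -> R}.
Hypotheses (lam_ge0 : forall r, 0 <= r -> 0 <= lam r)
  (lam_loc : forall r, 0 <= r ->
     lebesgue_measure.-integrable `[0, r] (fun x => (lam x)%:E)).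
Context {d1 d2 : measure_display} {T1 : measurableType d1} {T2 : measurableType d2}
  {P1 : probability T1 R} {P2 : probability T2 R}
  {R1 : nat -> T1 -> R} {R2 : nat -> T2 -> R}.
Hypotheses (hP1 : is_PPP P1 lam R1)
  (hP2 : is_PPP P2 (fun r => a^-1 * lam (r / a)) R2).

Lemma scaled_PPP_cylinder s :
  P1 (scaled_paths 1 R1 @^-1` lt_cylinder s) =
  P2 (scaled_paths a^-1 R2 @^-1` lt_cylinder s).
Proof.
rewrite !scaled_paths_preimage_cylinder ?invr_gt0 //.
rewrite (is_PPP_lt_points hP1) (is_PPP_lt_points hP2).
have -> : (fun l => cylinder_threshold s l / a^-1) =
    (fun l => a * (cylinder_threshold s l / 1)).
  by apply/funext => l; rewrite invrK divr1 mulrC.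
apply: eq_fsbigr => u _; congr (_%:E); apply: eq_bigr => j _.
by rewrite intensity_mass_scale.
Qed.

Lemma scaled_PPP_paths_law A : measurable (A : set (paths R)) ->
  P1 (scaled_paths 1 R1 @^-1` A) = P2 (scaled_paths a^-1 R2 @^-1` A).
Proof.
have ainv_gt0 : 0 < a^-1 by rewrite invr_gt0.
have mY1 := measurable_scaled_paths hP1 ltr01.
have mY2 := measurable_scaled_paths hP2 ainv_gt0.
pose law1 :=
  measure_function_pushforward__canonical__measure_function_Measure P1 mY1.
pose law2 :=
  measure_function_pushforward__canonical__measure_function_Measure P2 mY2.
have cylT : lt_cylinder [::] = [set: realseq R] by apply/seteqP; split.
apply: (measure_unique (@lt_cylinders R : set (set (paths R)))
  (fun=> lt_cylinder [::]) _ _ _ _ law1 law2) => //.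
- exact: lt_cylinders_setI_closed.
- by move=> _; exists [::].
- by rewrite bigcup_const.
- by move=> _ [s _ <-]; exact: scaled_PPP_cylinder.
- move=> _; rewrite /= /pushforward cylT preimage_setT probability_setT.
  exact: ltry.
Qed.

End ScaledProcess.

Theorem corollary1 (R : realType) (eps : R) (lam : R -> R)
  (heps : 0 < eps)
  (lam_ge0 : forall r : R, 0 <= r -> 0 <= lam r)
  (lam_loc : forall r : R, 0 <= r ->
     lebesgue_measure.-integrable `[0, r] (fun x => (lam x)%:E))
  (a : R) (ha : 0 < a)
  (d1 : measure_display) (T1 : measurableType d1) (P1 : probability T1 R)
  (R1 : nat -> T1 -> R)
  (d2 : measure_display) (T2 : measurableType d2) (P2 : probability T2 R)
  (R2 : nat -> T2 -> R)
  (hP1 : is_PPP P1 lam R1)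
  (hP2 : is_PPP P2 (fun r => a^-1 * lam (r / a)) R2) :
  forall x : R,
    P1 [set w | (x%:E < CI_ratio eps R1 w)%E]
    = P2 [set w | (x%:E < CI_ratio eps R2 w)%E].
Proof.
move=> x; have ainv_gt0 : 0 < a^-1 by rewrite invr_gt0.
rewrite -(scaled_paths_preimage_CI_ratio_gt hP1 ltr01).
rewrite -(scaled_paths_preimage_CI_ratio_gt hP2 ainv_gt0).
exact: (scaled_PPP_paths_law ha lam_ge0 lam_loc hP1 hP2)
  (measurable_CI_ratio_gt eps x).
Qed.
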